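(* For all integers $n\geq 0$ and $i\geq 1$, \begin{align*} \bar a_{2i}(4n+3)&\equiv 0 \pmod 4, & \bar a_{2i}(8n+6)&\equiv 0 \pmod 4,\\ \bar a_{2i}(8n+5)&\equiv 0 \pmod 4, & \bar a_{2i}(8n+7)&\equiv 0 \pmod 8. \end{align*}
   Context: For an integer $k\geq 1$ let $f_k:=\prod_{n\geq 1}(1-q^{kn})$. For an integer $c\geq1$, the generalized overcubic partition function $\bar a_c(n)$ is defined by the generating function $\sum_{n\geq 0}\bar a_c(n)q^n=\dfrac{f_4^{c-1}}{f_1^2f_2^{2c-3}}$. *)

From HB Require Import structures.
From mathcomp Require Import all_boot all_order all_algebra.
Set Implicit Arguments. Unset Strict Implicit. Unset Printing Implicit Defensive.
Import GRing.Theory Num.Theory.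
Local Open Scope ring_scope.

(* Truncation of f_k = prod_{m>=1} (1 - q^{k m}) : the finite product over
   1 <= m <= N, which agrees with f_k in all coefficients of degree <= N
   (for k >= 1). *)
Definition fpoly (k N : nat) : {poly int} :=
  \prod_(1 <= m < N.+1) (1 - 'X^(k * m)).

(* Truncation of 1/f_k = prod_{m>=1} 1/(1 - q^{k m})
                     = prod_{m>=1} sum_{j>=0} q^{k m j},
   agreeing with 1/f_k in all coefficients of degree <= N (for k >= 1). *)
Definition finv (k N : nat) : {poly int} :=
  \prod_(1 <= m < N.+1) \sum_(j < N.+1) 'X^(k * m * j).

(* Generalized overcubic partition function (c >= 1):
   sum_n abar c n q^n = f_4^{c-1} / (f_1^2 f_2^{2c-3}).
   The factor f_2^{-(2c-3)} is finv 2 ^ (2c-3) when 2c >= 3 and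
   fpoly 2 ^ (3-2c) when c = 1 (one of the two exponents is 0). *)
Definition abar (c n : nat) : int :=
  (fpoly 4 n ^+ (c - 1) * finv 1 n ^+ 2 *
   finv 2 n ^+ (2 * c - 3) * fpoly 2 n ^+ (3 - 2 * c))`_n.

(* Write c = 2(j+1).  The generating function A = f_4^(2j+1) / (f_1^2 f_2^(4j+1))
   of abar c satisfies A * phi(-q) * phi(-q^2)^(2j+1) = 1, where by Gauss
   phi(-q) = f_1^2 / f_2 = 1 + 2 T(q) with T(q) = sum_(k >= 1) (-1)^k q^(k^2).
   Since 1 - 2x + 4x^2 inverts 1 + 2x modulo 8 and T(q)^2 = T(q^2) modulo 2,
   A = 1 - 2 T(q) - 2 T(q^2) + 4 T(q) T(q^2) + 4 Z(q^2) (mod 8) for some series Z.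
   So the coefficient of q^m is divisible by 4 unless m is 0, a square or twice a
   square, and for odd m by 8 unless m = x^2 + 2 y^2.  As squares are 0, 1 or 4
   modulo 8, this excludes the four progressions.
   Series are handled as polynomials compared modulo X^(m+1), and Gauss's identity
   comes from a finite Jacobi triple product, itself an instance of the q-binomial
   theorem. *)

From Pilot Require Import Defs.
From mathcomp Require Import all_boot all_order all_algebra.
From mathcomp Require Import ring zify.
From Stdlib Require Import Setoid.
Set Implicit Arguments. Unset Strict Implicit. Unset Printing Implicit Defensive.
Import GRing.Theory.
Local Open Scope ring_scope.

(* Congruence modulo the ideal (d, X^L) of Z[X]; for d = 0, agreement below degree L. *)
Definition eqmodX (d : int) (L : nat) (p q : {poly int}) : Prop :=
  exists r s : {poly int}, p - q = d%:P * r + 'X^L * s.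

Notation "p = q %[mod d , 'X^ L ]" := (eqmodX d L p q)
  (at level 70, q at next level, L at level 2,
   format "p  =  q  %[mod  d ,  ''X^' L ]") : ring_scope.

Section CongruenceModX.

Variables (d : int) (L : nat).

Lemma eqmodX_refl p : p = p %[mod d, 'X^L].
Proof. by exists 0, 0; rewrite subrr !mulr0 addr0. Qed.

Lemma eqmodX_sym p q : p = q %[mod d, 'X^L] -> q = p %[mod d, 'X^L].
Proof. by move=> [r [s e]]; exists (- r), (- s); rewrite -opprB e; ring. Qed.

Lemma eqmodX_trans p q t :
  p = q %[mod d, 'X^L] -> q = t %[mod d, 'X^L] -> p = t %[mod d, 'X^L].
Proof.
move=> [r [s e]] [r' [s' e']]; exists (r + r'), (s + s').
by rewrite -[p - t](subrKA q) e e'; ring.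
Qed.

Lemma eqmodX_add p p' q q' : p = p' %[mod d, 'X^L] -> q = q' %[mod d, 'X^L] ->
  p + q = p' + q' %[mod d, 'X^L].
Proof.
move=> [r [s e]] [r' [s' e']]; exists (r + r'), (s + s').
have -> : p + q - (p' + q') = (p - p') + (q - q') by ring.
by rewrite e e'; ring.
Qed.

Lemma eqmodX_opp p q : p = q %[mod d, 'X^L] -> - p = - q %[mod d, 'X^L].
Proof. by move=> [r [s e]]; exists (- r), (- s); rewrite -opprD e; ring. Qed.

Lemma eqmodX_mul p p' q q' : p = p' %[mod d, 'X^L] -> q = q' %[mod d, 'X^L] ->
  p * q = p' * q' %[mod d, 'X^L].
Proof.
move=> [r [s e]] [r' [s' e']]; exists (r * q + p' * r'), (s * q + p' * s').
have -> : p * q - p' * q' = (p - p') * q + p' * (q - q') by ring.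
by rewrite e e'; ring.
Qed.

Lemma eqmodX_exp p q n : p = q %[mod d, 'X^L] -> p ^+ n = q ^+ n %[mod d, 'X^L].
Proof.
move=> pq; elim: n => [|n IH]; first exact: eqmodX_refl.
by rewrite !exprS; apply: eqmodX_mul.
Qed.

Lemma eqmodX_mulXn_eq0 k p : (L <= k)%N -> 'X^k * p = 0 %[mod d, 'X^L].
Proof.
by move=> Lk; exists 0, ('X^(k - L) * p); rewrite subr0 mulr0 add0r mulrA -exprD subnKC.
Qed.

Lemma eqmodX_coef p q m : p = q %[mod d, 'X^L] -> (m < L)%N ->
  q`_m = 0 -> (d %| p`_m)%Z.
Proof.
move=> [r [s e]] mL qm0; have := congr1 (fun u : {poly int} => u`_m) e.
rewrite /= coefB qm0 subr0 coefD coefCM coefXnM mL addr0 => ->.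
exact: dvdz_mulr.
Qed.

End CongruenceModX.

#[local] Hint Resolve eqmodX_refl : core.

Add Parametric Relation d L : {poly int} (eqmodX d L)
  reflexivity proved by (@eqmodX_refl d L)
  symmetry proved by (@eqmodX_sym d L)
  transitivity proved by (@eqmodX_trans d L) as eqmodX_rel.

Add Parametric Morphism d L : (@GRing.add {poly int})
  with signature eqmodX d L ==> eqmodX d L ==> eqmodX d L as eqmodX_add_morph.
Proof. by move=> *; apply: eqmodX_add. Qed.

Add Parametric Morphism d L : (@GRing.opp {poly int})
  with signature eqmodX d L ==> eqmodX d L as eqmodX_opp_morph.
Proof. exact: eqmodX_opp. Qed.

Add Parametric Morphism d L : (@GRing.mul {poly int})
  with signature eqmodX d L ==> eqmodX d L ==> eqmodX d L as eqmodX_mul_morph.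
Proof. by move=> *; apply: eqmodX_mul. Qed.

Add Parametric Morphism d L : (@GRing.exp {poly int})
  with signature eqmodX d L ==> eq ==> eqmodX d L as eqmodX_exp_morph.
Proof. by move=> *; apply: eqmodX_exp. Qed.

Lemma eqmodX_eq d L p q : p = q -> p = q %[mod d, 'X^L].
Proof. by move->. Qed.

Lemma eqmodX_sum d L (I : Type) (r : seq I) (F G : I -> {poly int}) :
  (forall i, F i = G i %[mod d, 'X^L]) ->
  \sum_(i <- r) F i = \sum_(i <- r) G i %[mod d, 'X^L].
Proof.
move=> FG; elim: r => [|i r IH]; first by rewrite !big_nil.
by rewrite !big_cons FG IH.
Qed.

Lemma eqmodX_1subXn d L k : (L <= k)%N -> 1 - 'X^k = 1 %[mod d, 'X^L].
Proof. by move=> Lk; rewrite -['X^k]mulr1 eqmodX_mulXn_eq0 // subr0. Qed.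

Lemma eqmodX_cancel d L p q G g : G * g = 1 %[mod d, 'X^L] ->
  p * G = q * G %[mod d, 'X^L] -> p = q %[mod d, 'X^L].
Proof.
move=> Gg pq; transitivity (p * G * g); first by rewrite -mulrA Gg mulr1.
by rewrite pq -mulrA Gg mulr1.
Qed.

Lemma eqmodX_natmul (n L : nat) p q r : p - q = n%:R * r -> p = q %[mod n%:R, 'X^L].
Proof. by move=> e; exists r, 0; rewrite e polyC_natr mulr0 addr0. Qed.

Lemma eqmodX_dvd d d' L p q : (d %| d')%Z ->
  p = q %[mod d', 'X^L] -> p = q %[mod d, 'X^L].
Proof. by move=> /dvdzP [k ->] [r [s e]]; exists (k%:P * r), s; rewrite e polyCM; ring. Qed.

Lemma eqmodX_leq d L L' p q : (L' <= L)%N ->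
  p = q %[mod d, 'X^L] -> p = q %[mod d, 'X^L'].
Proof. by move=> LL' [r [s e]]; exists r, ('X^(L - L') * s); rewrite e mulrA -exprD subnKC. Qed.

Lemma eqmodX_mulXn d L e p q : p = q %[mod d, 'X^L] ->
  'X^e * p = 'X^e * q %[mod d, 'X^(e + L)].
Proof.
move=> [r [s h]]; exists ('X^e * r), s.
by rewrite -mulrBr h exprD; ring.
Qed.

Lemma eqmodX_compXn d L k p q : p = q %[mod d, 'X^L] ->
  p \Po 'X^k = q \Po 'X^k %[mod d, 'X^(k * L)].
Proof.
move=> [r [s h]]; exists (r \Po 'X^k), (s \Po 'X^k).
by rewrite -rmorphB h rmorphD !rmorphM /= comp_polyC comp_Xn_poly -exprM mulnC.
Qed.

Lemma mul2_bin2 n : (2 * 'C(n, 2) = n * n.-1)%N.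
Proof. by elim: n => [|n IH] //; rewrite binS bin1 mulnDr IH; case: n {IH}; nia. Qed.

Section QBinomial.

Variables (R : comRingType) (Q : R).

Fixpoint qfact (n : nat) : R :=
  if n is m.+1 then qfact m * (1 - Q ^+ m.+1) else 1.

Fixpoint qbin (n i : nat) : R :=
  match n, i with
  | _, 0 => 1
  | 0, _.+1 => 0
  | m.+1, j.+1 => qbin m j.+1 + Q ^+ (m - j) * qbin m j
  end.

Lemma qbin_gt n i : (n < i)%N -> qbin n i = 0.
Proof. by elim: n i => [|n IH] [|i] //= lt_ni; rewrite !IH ?mulr0 ?addr0 //; lia. Qed.

Lemma qbin_n0 n : qbin n 0 = 1.
Proof. by case: n. Qed.

Lemma qbinn n : qbin n n = 1.
Proof. by elim: n => [|n IH] //=; rewrite qbin_gt // subnn expr0 mul1r IH add0r. Qed.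

Lemma qbin_qfact n i : (i <= n)%N -> qbin n i * qfact i * qfact (n - i) = qfact n.
Proof.
elim: n i => [|n IH] [|i] //= le_in; rewrite ?mul1r ?mulr1 //.
rewrite subSS; have [lt_in | le_ni] := ltnP i n; last first.
  have -> : i = n by lia.
  by rewrite qbin_gt // qbinn subnn /=; ring.
have /= IH1 := IH _ lt_in; have IH2 := IH _ (ltnW lt_in).
have [k def_n] : exists k, n = (i + k.+1)%N by exists (n - i.+1)%N; lia.
rewrite def_n addnC addnK addSnnS addnK /= in IH1 IH2 *.
have -> : Q ^+ (k + i.+1).+1 = Q ^+ k.+1 * Q ^+ i.+1 by rewrite -exprD addSn.
set a := Q ^+ k.+1; set b := Q ^+ i.+1.
have -> : qfact (k + i.+1) * (1 - a * b) =
    qfact (k + i.+1) * (1 - a) + a * (1 - b) * qfact (k + i.+1) by ring.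
by rewrite -{1}IH1 -IH2 /a /b; ring.
Qed.

Lemma qbinomial (u v : R) n :
  \prod_(k < n) (u + Q ^+ k * v) =
  \sum_(i < n.+1) qbin n i * Q ^+ 'C(i, 2) * u ^+ (n - i) * v ^+ i.
Proof.
elim: n => [|n IH]; first by rewrite big_ord0 big_ord1 !expr0 !mulr1.
set F := fun m i => qbin m i * Q ^+ 'C(i, 2) * u ^+ (m - i) * v ^+ i.
set G := fun i => qbin n i.+1 * Q ^+ 'C(i.+1, 2) * u ^+ (n - i) * v ^+ i.+1.
have splitF (i : 'I_n.+1) : F n.+1 (bump 0 i) = G i + F n i * (Q ^+ n * v).
  have le_in : (i <= n)%N by rewrite -ltnS.
  rewrite /F /G /bump /= add1n binS bin1 exprD subSS.
  rewrite -[in Q ^+ n](subnK le_in) exprD !exprS; ring.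
have shiftG : u ^+ n.+1 + \sum_(i < n.+1) G i = (\sum_(i < n.+1) F n i) * u.
  rewrite big_ord_recr /= /G qbin_gt // !mul0r addr0 big_distrl big_ord_recl /=.
  rewrite /F /= qbin_n0 subn0 !expr0 !mulr1 mul1r -exprSr; congr (_ + _).
  apply: eq_bigr => i _; rewrite /bump /= add1n.
  by rewrite -(subnSK (ltn_ord i)) exprS; ring.
rewrite big_ord_recr IH [RHS]big_ord_recl (eq_bigr _ (fun i _ => splitF i)).
rewrite big_split -big_distrl -/(F n.+1 0) /F qbin_n0 subn0 !expr0 !mulr1 mul1r.
by rewrite addrA shiftG /F /=; ring.
Qed.

End QBinomial.

Lemma rmorph_qfact (R S : comRingType) (f : {rmorphism R -> S}) Q n :
  f (qfact Q n) = qfact (f Q) n.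
Proof. by elim: n => [|n IH] /=; rewrite ?rmorph1 // rmorphM rmorphB rmorph1 rmorphXn IH. Qed.

Lemma fpoly_qfact k N : fpoly k N = qfact 'X^k N.
Proof.
rewrite /fpoly; elim: N => [|N IH]; first by rewrite big_geq.
by rewrite big_nat_recr //= IH exprM.
Qed.

Lemma one_subXn_inv d k L : (0 < k)%N ->
  (1 - 'X^k) * \sum_(j < L) 'X^(k * j) = 1 %[mod d, 'X^L].
Proof.
move=> k_gt0; under eq_bigr do rewrite exprM.
by rewrite -opprB mulNr -subrX1 opprB -exprM eqmodX_1subXn // leq_pmull.
Qed.

(* [finv] alone would refer to the inverse of an injection from fingraph. *)
Lemma fpoly_finv k N : (0 < k)%N -> fpoly k N * Defs.finv k N = 1 %[mod 0, 'X^N.+1].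
Proof.
move=> k_gt0; rewrite /fpoly /Defs.finv -big_split /=.
suff prod_eq1 M : \prod_(1 <= m < M.+1)
    ((1 - 'X^(k * m)) * \sum_(j < N.+1) 'X^(k * m * j)) = 1 %[mod 0, 'X^N.+1].
  exact: prod_eq1.
elim: M => [|M IH]; first by rewrite big_geq.
by rewrite big_nat_recr //= IH mul1r one_subXn_inv // muln_gt0 k_gt0.
Qed.

Lemma qfact_Xn_trunc c a K : (a <= K)%N ->
  qfact 'X^c K = qfact 'X^c a %[mod 0, 'X^(c * a.+1)].
Proof.
move=> /subnKC <-; elim: (K - a)%N => [|t IH]; first by rewrite addn0.
rewrite addnS /= IH -exprM eqmodX_1subXn ?mulr1 //.
by rewrite leq_mul2l ltnS leq_addr orbT.
Qed.

Lemma qfact_Xn_unit c a L : (0 < c)%N ->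
  exists g, qfact 'X^c a * g = 1 %[mod 0, 'X^L].
Proof.
move=> c_gt0; elim: a => [|a [g IH]]; first by exists 1; rewrite mulr1.
exists (g * \sum_(j < L) 'X^(c * a.+1 * j)).
rewrite /= mulrACA IH mul1r -exprM one_subXn_inv //.
by rewrite muln_gt0 c_gt0.
Qed.

Lemma qbin_qfact_trunc c n i M : (0 < c)%N -> (i <= n)%N -> (minn i (n - i) <= M)%N ->
  qbin 'X^c n i * qfact 'X^c M = 1 %[mod 0, 'X^(c * (minn i (n - i)).+1)].
Proof.
move=> c_gt0 le_in le_aM; set a := minn i (n - i) in le_aM *.
have [g Gg] := qfact_Xn_unit a (c * a.+1) c_gt0.
rewrite (qfact_Xn_trunc c le_aM); apply: (eqmodX_cancel Gg).
transitivity (qbin ('X^c : {poly int}) n i * qfact 'X^c i * qfact 'X^c (n - i)).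
  by rewrite (qfact_Xn_trunc c (geq_minl i (n - i))) (qfact_Xn_trunc c (geq_minr i (n - i))).
by rewrite (qbin_qfact _ le_in) mul1r (qfact_Xn_trunc c (leq_trans (geq_minl i _) le_in)).
Qed.

(* (i - N)^2: one of the two truncated differences is 0. *)
Definition sqdist (N i : nat) : nat := ((N - i) ^ 2 + (i - N) ^ 2)%N.

Lemma sqdist_bin2E N i : (0 < N)%N -> (i <= 2 * N)%N ->
  (2 * 'C(i, 2) + (2 * N).-1 * (2 * N - i) =
   sqdist N i + (2 * 'C(N, 2) + (2 * N).-1 * N))%N.
Proof.
move=> N_gt0 le_i2N; apply/eqP; rewrite -eqz_nat /sqdist !mul2_bin2 -!mulnn.
have predM x : (x * x.-1)%N = x%:Z * (x%:Z - 1) :> int.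
  by case: x => [|x] //=; rewrite PoszM -[x.+1]addn1 PoszD addrK.
rewrite !PoszD !predM !PoszM (predn_int (_ : 0 < 2 * N)%N) ?muln_gt0 //.
rewrite -(subzn le_i2N) PoszM.
have [le_iN | lt_Ni] := leqP i N.
  by rewrite -(subzn le_iN) (eqP (_ : i - N == 0)%N) ?subn_eq0 //; apply/eqP; ring.
by rewrite -(subzn (ltnW lt_Ni)) (eqP (_ : N - i == 0)%N) ?subn_eq0 ?(ltnW lt_Ni) //; apply/eqP; ring.
Qed.

Definition qfact_odd (N : nat) : {poly int} := \prod_(k < N) (1 - 'X^(2 * k + 1)).

Lemma qfact_X_double N : qfact 'X (2 * N) = qfact_odd N * qfact 'X^2 N.
Proof.
elim: N => [|N IH]; first by rewrite /qfact_odd big_ord0 mulr1.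
rewrite mulnS add2n /= IH /qfact_odd big_ord_recr /= -exprM mulnS add2n addn1.
ring.
Qed.

Lemma prod_shift_odd N : (0 < N)%N ->
  \prod_(k < 2 * N) ('X^((2 * N).-1) + 'X^2 ^+ k * -1) =
  (-1) ^+ N * 'X^(2 * 'C(N, 2) + (2 * N).-1 * N) * qfact_odd N ^+ 2.
Proof.
move=> N_gt0; set u := (2 * N).-1; rewrite mul2n -addnn big_split_ord /=.
have -> : \prod_(i < N) ('X^u + 'X^2 ^+ i * -1) =
    \prod_(i < N) (-1 * 'X^(2 * i) * (1 - 'X^(2 * (N.-1 - i) + 1))) :> {poly int}.
  apply: eq_bigr => i _ /=; rewrite -exprM.
  have -> : 'X^u = 'X^(2 * i) * 'X^(2 * (N.-1 - i) + 1) :> {poly int}.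
    by rewrite -exprD /u; congr (_ ^+ _); have := ltn_ord i; lia.
  ring.
have -> : \prod_(i < N) ('X^u + 'X^2 ^+ (N + i) * -1) =
    \prod_(i < N) ('X^u * (1 - 'X^(2 * i + 1))) :> {poly int}.
  apply: eq_bigr => i _ /=; rewrite -exprM.
  have -> : 'X^(2 * (N + i)) = 'X^u * 'X^(2 * i + 1) :> {poly int}.
    by rewrite -exprD /u; congr (_ ^+ _); lia.
  ring.
rewrite !big_split /= !prodr_const !card_ord prodrXr -big_distrr /= -exprM.
rewrite -(big_mkord xpredT id) -bin2_sum exprD.
have -> : \prod_(i < N) (1 - 'X^(2 * (N.-1 - i) + 1)) = qfact_odd N :> {poly int}.
  rewrite /qfact_odd (reindex_inj rev_ord_inj); apply: eq_bigr => i _ /=.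
  by rewrite (_ : N.-1 - (N - i.+1) = i)%N //; have := ltn_ord i; lia.
rewrite /qfact_odd; ring.
Qed.

(* Finite Jacobi triple product, from the q-binomial theorem at Q = X^2,
   u = X^(2N-1), v = -1 after cancelling a monomial. *)
Lemma qfact_odd_sqr N : qfact_odd N ^+ 2 =
  \sum_(i < (2 * N).+1) (-1) ^+ (i + N) * 'X^(sqdist N i) * qbin 'X^2 (2 * N) i.
Proof.
have [->|N_gt0] := posnP N.
  by rewrite /qfact_odd big_ord0 big_ord1 expr1n /sqdist /= !expr0 !mulr1.
have := qbinomial ('X^2 : {poly int}) 'X^((2 * N).-1) (-1) (2 * N).
rewrite prod_shift_odd //; set c := (2 * 'C(N, 2) + _)%N.
have -> : \sum_(i < (2 * N).+1) qbin 'X^2 (2 * N) i * 'X^2 ^+ 'C(i, 2) *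
    'X^((2 * N).-1) ^+ (2 * N - i) * (-1) ^+ i =
  'X^c * \sum_(i < (2 * N).+1) (-1) ^+ i * 'X^(sqdist N i) * qbin 'X^2 (2 * N) i
    :> {poly int}.
  rewrite big_distrr; apply: eq_bigr => i _ /=.
  have le_i2N : (i <= 2 * N)%N by rewrite -ltnS.
  rewrite -!exprM -[_ * _ * 'X^_]mulrA -exprD sqdist_bin2E // addnC exprD; ring.
rewrite -mulrA mulrCA => /(mulfI (monic_neq0 (monicXn _ c))) /(congr1 (fun p => (-1) ^+ N * p)).
rewrite mulrA -expr2 sqrr_sign mul1r => ->; rewrite big_distrr; apply: eq_bigr => i _.
by rewrite exprD /=; ring.
Qed.

Lemma sqdist_minn_bound N i : (i <= 2 * N)%N ->
  (N.+1 <= sqdist N i + 2 * (minn i (2 * N - i)).+1)%N.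
Proof.
move=> le_i2N; rewrite /sqdist -!mulnn; have [le_iN|lt_Ni] := leqP i N.
  have [j ->] : exists j, N = (i + j)%N by exists (N - i)%N; lia.
  rewrite (minn_idPl _) ?addKn; last by lia.
  by rewrite (_ : i - (i + j) = 0)%N; nia.
have [j ->] : exists j, i = (N + j)%N by exists (i - N)%N; lia.
rewrite (minn_idPr _) ?addKn; last by lia.
rewrite (_ : N - (N + j) = 0)%N; last by lia.
rewrite (_ : 2 * N - (N + j) = N - j)%N; last by lia.
nia.
Qed.

(* phi(-q) = 1 + 2 thetaT N up to degree N. *)
Definition thetaT (N : nat) : {poly int} := \sum_(1 <= k < N.+1) (-1) ^+ k * 'X^(k ^ 2).

Lemma sum_sqdist_thetaT N :
  \sum_(i < (2 * N).+1) (-1) ^+ (i + N) * 'X^(sqdist N i) = 1 + 2 * thetaT N.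
Proof.
have sign_sym k : (k <= N)%N -> (-1) ^+ (N - k + N) = (-1) ^+ k :> {poly int}.
  move=> le_kN; rewrite (_ : N - k + N = k + (N - k) * 2)%N; last by lia.
  by rewrite exprD exprM sqrr_sign mulr1.
rewrite (_ : (2 * N).+1 = N + N.+1)%N; last by lia.
rewrite big_split_ord big_ord_recl /= addn0 /sqdist subnn addnn -mul2n.
rewrite (reindex_inj rev_ord_inj) /= /thetaT big_add1 big_mkord /=.
rewrite mulnC exprM sqrr_sign /= expr0 mulr1 mulr_natl mulr2n.
rewrite addrCA; congr (_ + (_ + _)); apply: eq_bigr => i _.
  rewrite sign_sym // subKn // (_ : N - i.+1 - N = 0)%N ?addn0 //.
  by rewrite subnAC subnn.
rewrite /bump /= add1n (_ : N + i.+1 + N = i.+1 + N * 2)%N; last by lia.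
by rewrite exprD exprM sqrr_sign mulr1 addKn subnDA subnn sub0n add0n.
Qed.

Lemma qbin_sqdist_trunc N i : (i <= 2 * N)%N ->
  'X^(sqdist N i) * (qbin 'X^2 (2 * N) i * qfact 'X^2 N) = 'X^(sqdist N i)
    %[mod 0, 'X^N.+1].
Proof.
move=> le_i2N; rewrite -[X in eqmodX _ _ _ X]mulr1.
apply: eqmodX_leq (sqdist_minn_bound le_i2N) _; apply: eqmodX_mulXn.
by apply: qbin_qfact_trunc => //; lia.
Qed.

Lemma gauss_trunc N :
  qfact 'X N ^+ 2 = qfact 'X^2 N * (1 + 2 * thetaT N) %[mod 0, 'X^N.+1].
Proof.
have := qfact_Xn_trunc 1 (leq_pmull N (isT : 0 < 2)%N); rewrite expr1 mul1n => trunc.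
rewrite -trunc qfact_X_double exprMn qfact_odd_sqr -sum_sqdist_thetaT big_distrl big_distrr.
apply: eqmodX_sum => i; have le_i2N : (i <= 2 * N)%N by rewrite -ltnS.
transitivity ((-1) ^+ (i + N) *
  ('X^(sqdist N i) * (qbin 'X^2 (2 * N) i * qfact 'X^2 N)) * qfact 'X^2 N : {poly int}).
  by apply: eqmodX_eq => /=; ring.
by rewrite qbin_sqdist_trunc //; apply: eqmodX_eq => /=; ring.
Qed.

Lemma gauss_trunc_X2 N :
  qfact 'X^2 N ^+ 2 = qfact 'X^4 N * (1 + 2 * (thetaT N \Po 'X^2)) %[mod 0, 'X^N.+1].
Proof.
have := eqmodX_compXn 2 (gauss_trunc N).
rewrite rmorphXn rmorphM !rmorph_qfact /= comp_polyX comp_Xn_poly -exprM.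
rewrite rmorphD rmorph1 rmorphM rmorph_nat; apply: eqmodX_leq; lia.
Qed.

Definition agf (j N : nat) : {poly int} :=
  fpoly 4 N ^+ (2 * j + 1) * Defs.finv 1 N ^+ 2 * Defs.finv 2 N ^+ (4 * j + 1).

Lemma abar_agf j m : abar (2 * j.+1) m = (agf j m)`_m.
Proof.
rewrite /abar /agf (_ : 2 * j.+1 - 1 = 2 * j + 1)%N; last by lia.
rewrite (_ : 2 * (2 * j.+1) - 3 = 4 * j + 1)%N; last by lia.
by rewrite (_ : 3 - 2 * (2 * j.+1) = 0)%N ?expr0 ?mulr1 //; lia.
Qed.

Lemma agf_theta j N :
  agf j N * (1 + 2 * thetaT N) * (1 + 2 * (thetaT N \Po 'X^2)) ^+ (2 * j + 1) = 1
    %[mod 0, 'X^N.+1].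
Proof.
have fg k : (0 < k)%N -> qfact 'X^k N * Defs.finv k N = 1 %[mod 0, 'X^N.+1].
  by move=> k_gt0; rewrite -fpoly_qfact fpoly_finv.
have theta1 : 1 + 2 * thetaT N = qfact 'X N ^+ 2 * Defs.finv 2 N %[mod 0, 'X^N.+1].
  transitivity ((1 + 2 * thetaT N) * (qfact 'X^2 N * Defs.finv 2 N)).
    by rewrite fg // mulr1.
  by rewrite mulrCA mulrA -gauss_trunc.
have theta2 : 1 + 2 * (thetaT N \Po 'X^2) = qfact 'X^2 N ^+ 2 * Defs.finv 4 N
    %[mod 0, 'X^N.+1].
  transitivity ((1 + 2 * (thetaT N \Po 'X^2)) * (qfact 'X^4 N * Defs.finv 4 N)).
    by rewrite fg // mulr1.
  by rewrite mulrCA mulrA -gauss_trunc_X2.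
rewrite /agf theta1 theta2 fpoly_qfact.
rewrite exprMn -exprM.
transitivity ((qfact 'X^4 N * Defs.finv 4 N) ^+ (2 * j + 1) *
  (qfact 'X N * Defs.finv 1 N) ^+ 2 *
  (qfact 'X^2 N ^+ (2 * (2 * j + 1)) * (Defs.finv 2 N ^+ (4 * j + 1) * Defs.finv 2 N))).
  apply: eqmodX_eq; rewrite !exprMn.
  move: (qfact 'X^4 N ^+ _) (Defs.finv 4 N ^+ _) (qfact 'X^2 N ^+ _) (Defs.finv 2 N ^+ _).
  by move=> a b c d; ring.
rewrite -exprSr (_ : (4 * j + 1).+1 = 2 * (2 * j + 1))%N; last by lia.
have := fg 1%N isT; rewrite expr1 => fg1.
by rewrite -exprMn !fg // fg1 !expr1n !mulr1.
Qed.

Lemma exp_1add2_odd (R : comRingType) (y : R) k : odd k ->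
  exists g, (1 + 2 * y) ^+ k = 1 + 2 * y + 4 * g.
Proof.
move=> k_odd; rewrite -(odd_double_half k) k_odd add1n -mul2n exprS exprM.
have [g ->] : exists g, ((1 + 2 * y) ^+ 2) ^+ k./2 = 1 + 4 * g.
  elim: k./2 => [|h [g IH]]; first by exists 0; rewrite expr0 mulr0 addr0.
  by exists (g + (y + y ^+ 2) * (1 + 4 * g)); rewrite exprS IH; ring.
by exists (g * (1 + 2 * y)); ring.
Qed.

Lemma int_sqr_mod2 (c : int) : exists k, c ^+ 2 = c + 2 * k.
Proof.
have def_c := divz_eq c 2; set q := (c %/ 2)%Z in def_c *; set b := (c %% 2)%Z in def_c.
have [b0|b1] : b = 0 \/ b = 1.
- by have := modz_ge0 c (isT : 2 != 0 :> int); have := ltz_pmod c (isT : 0 < 2 :> int); lia.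
- by exists (2 * q ^+ 2 - q); rewrite def_c b0; ring.
- by exists (2 * q ^+ 2 + q); rewrite def_c b1; ring.
Qed.

Lemma poly_sqr_mod2 (p : {poly int}) : exists r, p ^+ 2 = p \Po 'X^2 + 2 * r.
Proof.
elim/poly_ind: p => [|p c [r IH]]; first by exists 0; rewrite expr0n comp_polyC mulr0 addr0.
have [k ck] := int_sqr_mod2 c.
exists (r * 'X^2 + c%:P * p * 'X + k%:P).
rewrite comp_poly_MXaddC (_ : p \Po 'X^2 = p ^+ 2 - 2 * r); last by rewrite IH addrK.
have ec : c%:P ^+ 2 = c%:P + 2 * k%:P :> {poly int}.
  by rewrite -rmorphXn ck rmorphD rmorphM /= polyC_natr.
by rewrite sqrrD ec; ring.
Qed.

Lemma inv_1add2_mod8 (A t : {poly int}) k L : odd k ->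
  A * (1 + 2 * t) * (1 + 2 * (t \Po 'X^2)) ^+ k = 1 %[mod 0, 'X^L] ->
  exists z, A = 1 - 2 * t - 2 * (t \Po 'X^2) + 4 * (t * (t \Po 'X^2)) + 4 * (z \Po 'X^2)
    %[mod 8, 'X^L].
Proof.
move=> k_odd /(eqmodX_dvd (dvdz0 8)) hA.
have inv8 x : (1 + 2 * x) * (1 - 2 * x + 4 * x ^+ 2) = 1 %[mod 8, 'X^L].
  by apply: (@eqmodX_natmul 8 _ _ _ (x ^+ 3)); ring.
have [g hg] := exp_1add2_odd (- t + 2 * t ^+ 2) k_odd.
have [r hr] := poly_sqr_mod2 t.
exists (t ^+ 2 + g + t); set s := t \Po 'X^2.
transitivity (A * ((1 + 2 * t) * (1 - 2 * t + 4 * t ^+ 2)) *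
    ((1 + 2 * s) * (1 - 2 * s + 4 * s ^+ 2)) ^+ k).
  by rewrite !inv8 expr1n !mulr1.
transitivity (A * (1 + 2 * t) * (1 + 2 * s) ^+ k *
    ((1 - 2 * t + 4 * t ^+ 2) * (1 - 2 * s + 4 * s ^+ 2) ^+ k)).
  by apply: eqmodX_eq; rewrite exprMn; move: (_ ^+ k) (_ ^+ k) => a b; ring.
rewrite hA mul1r.
have -> : (1 - 2 * s + 4 * s ^+ 2) ^+ k = ((1 + 2 * (- t + 2 * t ^+ 2)) ^+ k) \Po 'X^2.
  by rewrite rmorphXn !(rmorphD, rmorphM, rmorphN, rmorph_nat, rmorph1, rmorphXn); congr (_ ^+ k); ring.
rewrite hg /s !(rmorphD, rmorphM, rmorphN, rmorph_nat, rmorph1) /=.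
move: (g \Po 'X^2) => w.
(* Both sides now agree modulo 8 once t^2 = t(X^2) + 2r is used. *)
rewrite (_ : t \Po 'X^2 = t ^+ 2 - 2 * r); last by rewrite hr addrK.
have : t ^+ 2 = (t ^+ 2 - 2 * r) + 2 * r by rewrite subrK.
move: (t ^+ 2 - 2 * r) => u ->.
apply: (@eqmodX_natmul 8 _ _ _
  (r - t * u ^+ 2 - t * w - (u + 2 * r) * u + 2 * (u + 2 * r) * (u ^+ 2 + w))).
ring.
Qed.

Lemma coef_signXn k e m : ((-1) ^+ k * 'X^e : {poly int})`_m = (-1) ^+ k * (m == e)%:R.
Proof. by rewrite -(rmorph_sign (@polyC int)) coefCM coefXn. Qed.

Lemma coef_natM (n : nat) (p : {poly int}) m : (n%:R * p)`_m = n%:R * p`_m.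
Proof. by rewrite !mulr_natl coefMn. Qed.

Lemma coef_thetaT N m : (forall x, m != x ^ 2)%N -> (thetaT N)`_m = 0.
Proof.
move=> m_nsq; rewrite /thetaT coef_sum big1 // => k _.
by rewrite coef_signXn (negbTE (m_nsq k)) mulr0.
Qed.

Lemma coef_thetaT_X2 N m : (forall y, m != 2 * y ^ 2)%N -> (thetaT N \Po 'X^2)`_m = 0.
Proof.
move=> m_n2sq; rewrite coef_comp_poly_Xn //; case: ifP => // /dvdnP [h def_m].
by rewrite coef_thetaT // def_m mulnK // => x; apply: contra (m_n2sq x); rewrite def_m mulnC => /eqP ->.
Qed.

Lemma coef_thetaT_mul_X2 N m : (forall x y, m != x ^ 2 + 2 * y ^ 2)%N ->
  (thetaT N * (thetaT N \Po 'X^2))`_m = 0.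
Proof.
move=> m_nrep; rewrite {2}/thetaT rmorph_sum mulr_sumr coef_sum big1 // => y _.
rewrite rmorphM rmorph_sign /= comp_Xn_poly -exprM /thetaT mulr_suml coef_sum big1 // => x _.
by rewrite mulrACA -exprD -exprD coef_signXn (negbTE (m_nrep x y)) mulr0.
Qed.

Lemma agf_mod8 j m : exists z, agf j m =
  1 - 2 * thetaT m - 2 * (thetaT m \Po 'X^2) + 4 * (thetaT m * (thetaT m \Po 'X^2))
    + 4 * (z \Po 'X^2) %[mod 8, 'X^m.+1].
Proof. by apply: inv_1add2_mod8 (agf_theta j m); rewrite oddD oddM. Qed.

Lemma sqr_mod8 x : (x ^ 2 %% 8 = 0 \/ x ^ 2 %% 8 = 1 \/ x ^ 2 %% 8 = 4)%N.
Proof.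
rewrite -modnXm; have : (x %% 8 < 8)%N by rewrite ltn_pmod.
by move: (x %% 8)%N => r; do 8! (case: r => [|r] //=; try by [left | right; left | right; right]).
Qed.

Lemma agf_coef_mod4 j m : (m %% 8 \in [:: 3; 5; 6; 7])%N -> (4 %| (agf j m)`_m)%Z.
Proof.
rewrite !inE => m_mod8; have [z h8] := agf_mod8 j m.
have h4 : agf j m = 1 - 2 * thetaT m - 2 * (thetaT m \Po 'X^2) %[mod 4, 'X^m.+1].
  rewrite (eqmodX_dvd (isT : 4 %| 8)%Z h8).
  by apply: (@eqmodX_natmul 4 _ _ _ (thetaT m * (thetaT m \Po 'X^2) + (z \Po 'X^2))); ring.
apply: (eqmodX_coef h4 (ltnSn m)).
have m_neq0 : m != 0%N by lia.
have m_nsq x : (m != x ^ 2)%N by have := sqr_mod8 x; move: (x ^ 2)%N => y; lia.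
have m_n2sq y : (m != 2 * y ^ 2)%N by have := sqr_mod8 y; move: (y ^ 2)%N => x; lia.
by rewrite !coefB !coef_natM coef1 (negbTE m_neq0) coef_thetaT ?coef_thetaT_X2 // !mulr0 !subr0.
Qed.

Lemma agf_coef_mod8 j m : (m %% 8 = 7)%N -> (8 %| (agf j m)`_m)%Z.
Proof.
move=> m_mod8; have [z h8] := agf_mod8 j m; apply: (eqmodX_coef h8 (ltnSn m)).
have coef_X2_odd (p : {poly int}) : (p \Po 'X^2)`_m = 0.
  by rewrite coef_comp_poly_Xn // (_ : 2 %| m = false)%N //; lia.
have m_nrep x y : (m != x ^ 2 + 2 * y ^ 2)%N.
  by have := sqr_mod8 x; have := sqr_mod8 y; move: (x ^ 2)%N (y ^ 2)%N => a b; lia.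
have m_nsq x : (m != x ^ 2)%N by have := m_nrep x 0%N; rewrite muln0 addn0.
have m_neq0 : m != 0%N by lia.
rewrite !(coefD, coefN) !coef_natM coef1 !coef_X2_odd coef_thetaT_mul_X2 //.
by rewrite coef_thetaT // (negbTE m_neq0) !mulr0 !oppr0 !addr0.
Qed.

Theorem theorem1p5 (n i : nat) : (1 <= i)%N ->
  [/\ (4 %| abar (2 * i) (4 * n + 3))%Z,
      (4 %| abar (2 * i) (8 * n + 6))%Z,
      (4 %| abar (2 * i) (8 * n + 5))%Z &
      (8 %| abar (2 * i) (8 * n + 7))%Z].
Proof.
case: i => [//|j] _; rewrite !abar_agf.
by split; [apply: agf_coef_mod4 .. | apply: agf_coef_mod8]; rewrite ?inE; lia.
Qed.
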